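(* For every zero-normalized $\Gamma_{m,n}$-semimodule $\Delta$ one has $G_n(\Delta)=\big(G_m(\widehat{\Delta})\big)^T$, where $T$ denotes transposition (conjugation) of Young diagrams.
   Context: Let $m,n$ be coprime positive integers and $\Gamma=\{am+bn:a,b\in\mathbb{Z}_{\ge0}\}$. A $\Gamma$-semimodule is $\Delta\subset\mathbb{Z}_{\ge0}$ with $\Delta+\Gamma\subset\Delta$; zero-normalized means $\min\Delta=0$. For $p\in\{m,n\}$, a $p$-generator of $\Delta$ is $a\in\Delta$ with $a-p\notin\Delta$; there are exactly $p$ of them. Let $a_1<\dots<a_m$ be the $m$-generators and $b_1<\dots<b_n$ the $n$-generators. Put $g_m(x)=\#(([x,x+n)\cap\mathbb{Z})\setminus\Delta)$ and $g_n(x)=\#(([x,x+m)\cap\mathbb{Z})\setminus\Delta)$. Then $g_m(a_1)\ge\dots\ge g_m(a_m)$ and $g_n(b_1)\ge\dots\ge g_n(b_n)$; $G_m(\Delta)$ is the Young diagram with column heights $g_m(a_1),\dots,g_m(a_m)$ and $G_n(\Delta)$ the Young diagram with column heights $g_n(b_1),\dots,g_n(b_n)$. The dual semimodule is $\Delta^*=\{\varphi\in\mathbb{Z}:\varphi+\Delta\subset\Gamma\}$ and $\widehat{\Delta}=\Delta^*-\min\Delta^*$ is its zero-normalization; equivalently $\widehat\Delta=\max(\mathbb{Z}\setminus\Delta)-(\mathbb{Z}\setminus\Delta)$. *)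

From mathcomp Require Import all_boot all_order all_algebra.
From mathcomp Require Import boolp.
Set Implicit Arguments. Unset Strict Implicit. Unset Printing Implicit Defensive.
Import Order.TTheory GRing.Theory Num.Theory.

Definition inGamma (m n : nat) (z : int) : Prop :=
  exists a b : nat, z = Posz (a * m + b * n)%N.

Definition semimodule (m n : nat) (D : nat -> Prop) : Prop :=
  forall x a b : nat, D x -> D (x + a * m + b * n)%N.

(* min Delta = 0  (for Delta a subset of nat this just says 0 \in Delta). *)
Definition zero_normalized (D : nat -> Prop) : Prop :=
  D 0%N /\ forall x, D x -> (0 <= x)%N.

Definition dual (m n : nat) (D : nat -> Prop) (phi : int) : Prop :=
  forall x : nat, D x -> inGamma m n (phi + Posz x)%R.

(* hat Delta = Delta^* - min Delta^*  (a subset of Z_{>=0}). *)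
Definition hat (m n : nat) (D : nat -> Prop) (x : nat) : Prop :=
  exists phi0 : int,
    [/\ dual m n D phi0,
        (forall phi, dual m n D phi -> (phi0 <= phi)%R)
      & dual m n D (phi0 + Posz x)%R].

(* a is a p-generator of Delta: a \in Delta and a - p \notin Delta
   (a - p < 0 counts as "not in Delta"). *)
Definition is_gen (p : nat) (D : nat -> Prop) (a : nat) : Prop :=
  D a /\ ~ ((p <= a)%N /\ D (a - p)%N).

(* For a
   zero-normalized Gamma_{m,n}-semimodule all p-generators are < p + m*n
   (Delta contains Gamma, whose Frobenius number is mn-m-n), so this list
   contains all of them. *)
Definition gens (m n p : nat) (D : nat -> Prop) : seq nat :=
  [seq a <- iota 0 (p + m * n) | `[< is_gen p D a >] ].

Definition gaps_in (D : nat -> Prop) (x len : nat) : nat :=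
  count (fun y => ~~ `[< D y >]) (iota x len).

Definition Gm_heights (m n : nat) (D : nat -> Prop) : seq nat :=
  [seq gaps_in D a n | a <- gens m n m D].

Definition Gn_heights (m n : nat) (D : nat -> Prop) : seq nat :=
  [seq gaps_in D b m | b <- gens m n n D].

(* Young diagram with column heights hs (column i, 0-based, contains the
   cells (i, k) with k < hs_i), as a set of cells. *)
Definition young_diagram (hs : seq nat) (c : nat * nat) : Prop :=
  (c.1 < size hs)%N /\ (c.2 < nth 0%N hs c.1)%N.

Definition transpose_diagram (Y : nat * nat -> Prop) (c : nat * nat) : Prop :=
  Y (c.2, c.1).

(* Let F be the largest gap of D and f = mn - m - n the Frobenius number of
   Gamma.  Since Gamma is symmetric (z \in Gamma iff f - z \notin Gamma),
   phi \in D^* iff f - phi \notin D, so hat D = F - (Z \ D).  If a set is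
   closed under +p, its residue classes mod p are the arithmetic progressions
   g + pN starting at its p-generators g; hence the number of y in a window
   [a, a + p) with t - y in the set is the number of p-generators g with
   g + a <= t.  Applied to D (p = n, t = F) and to hat D (p = m), this gives
   g_m(a_j) = #{i | a_j + b_i <= F} for hat D and g_n(b_i) = #{j | a_j + b_i <= F}
   for D, so both diagrams are the set of pairs with a_j + b_i <= F, read along
   rows in one case and along columns in the other. *)

From mathcomp Require Import all_boot all_order all_algebra.
From mathcomp Require Import boolp zify ring.
Import Order.TTheory GRing.Theory Num.Theory.

Local Open Scope ring_scope.

Definition int_mem (S : nat -> Prop) (z : int) : Prop :=
  if z is Posz k then S k else False.

Lemma int_mem_neg (S : nat -> Prop) (z : int) : z < 0 -> ~ int_mem S z.
Proof. by case: z => [k|k] lt0 //=; move: lt0; rewrite ltz_nat. Qed.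

Lemma ltn_count_sorted (s : seq nat) (P : pred nat) j : sorted ltn s ->
  (forall x y, (x <= y)%N -> P y -> P x) ->
  (j < count P s)%N = (j < size s)%N && P (nth 0%N s j).
Proof.
elim: s j => [|x s IH] j s_sorted P_down /=; first by rewrite ltn0.
have x_min := order_path_min ltn_trans s_sorted.
have P_tail : ~~ P x -> forall y, y \in s -> ~~ P y.
  by move=> Px y /(allP x_min) /ltnW xy; apply: contra Px; apply: P_down.
case Px: (P x) => /=.
  by case: j => [|j] //=; rewrite add1n ltnS IH ?(path_sorted s_sorted).
have -> : count P s = 0%N.
  by apply/eqP; rewrite -leqn0 leqNgt -has_count; apply/hasPn/P_tail; rewrite Px.
rewrite ltn0; case: j => [|j] /=; first by rewrite Px.
by rewrite ltnS; case: ltnP => //= j_lt; rewrite (negbTE (P_tail _ _ (mem_nth 0%N j_lt))) ?Px.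
Qed.

Lemma young_diagram_thresholdE (X Y : seq nat) (F : int) i j : sorted ltn X ->
  young_diagram [seq count (fun x : nat => x%:Z + y%:Z <= F) X | y <- Y] (i, j)
  <-> [/\ (i < size Y)%N, (j < size X)%N & (nth 0%N X j)%:Z + (nth 0%N Y i)%:Z <= F].
Proof.
move=> X_sorted; rewrite /young_diagram /= size_map.
have [i_lt | _] := ltnP i (size Y); last by split=> [[]|[]].
rewrite (nth_map 0%N) // ltn_count_sorted //; last by move=> x y; lia.
by split=> [[_ /andP[]] | []] // _ j_lt le_F; rewrite j_lt.
Qed.

Lemma young_diagram_threshold_transpose (A B : seq nat) (F : int) :
  sorted ltn A -> sorted ltn B ->
  young_diagram [seq count (fun a : nat => a%:Z + b%:Z <= F) A | b <- B]
  = transpose_diagram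
      (young_diagram [seq count (fun b : nat => b%:Z + a%:Z <= F) B | a <- A]).
Proof.
move=> A_sorted B_sorted; apply: funext => -[i j]; apply: propext.
rewrite /transpose_diagram /= !young_diagram_thresholdE //.
by split=> -[? ? le_F]; split; rewrite // addrC.
Qed.

Section GeneratorCount.
Variables (p N : nat) (S : nat -> Prop).
Hypotheses (p_gt0 : (0 < p)%N) (S_addp : forall x, S x -> S (x + p)%N)
  (gen_lt : forall a, is_gen p S a -> (a < N)%N).

Let gensS := [seq a <- iota 0 N | `[< is_gen p S a >]].
Let window (c : int) := count (fun x : nat => `[< int_mem S (c - x%:Z) >]) (iota 0 p).
Let gens_le (c : int) := count (fun g : nat => g%:Z <= c) gensS.

Lemma window_step c :
  (window (c + 1) + `[< int_mem S (c - (p.-1)%:Z) >] =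
   window c + `[< int_mem S (c + 1) >])%N.
Proof.
rewrite /window; case: p p_gt0 => // q _.
have first_split :
    count (fun x : nat => `[< int_mem S (c + 1 - x%:Z) >]) (iota 0 q.+1) =
    (`[< int_mem S (c + 1) >]
     + count (fun x : nat => `[< int_mem S (c - x%:Z) >]) (iota 0 q))%N.
  rewrite -[q.+1]add1n iotaD /= subr0 add0n.
  have -> : iota 1 q = map (addn 1) (iota 0 q) by rewrite -iotaDl.
  by rewrite count_map; congr addn; apply: eq_count => x /=; congr `[< int_mem S _ >]; lia.
have last_split :
    count (fun x : nat => `[< int_mem S (c - x%:Z) >]) (iota 0 q.+1) =
    (count (fun x : nat => `[< int_mem S (c - x%:Z) >]) (iota 0 q)
     + `[< int_mem S (c - q%:Z) >])%N.
  by rewrite -addn1 iotaD count_cat /= add0n addn0.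
by rewrite first_split last_split -pred_Sn; lia.
Qed.

Lemma int_mem_gen_split (k : nat) :
  `[< int_mem S k >] = (`[< int_mem S (k%:Z - p%:Z) >] + `[< is_gen p S k >])%N :> nat.
Proof.
have [p_le | k_lt] := leqP p k; last first.
  rewrite (asboolF (P := int_mem S (k%:Z - p%:Z))) ?add0n; last by apply: int_mem_neg; lia.
  by congr nat_of_bool; apply/asboolP/asboolP => [Sk | []//]; split=> // -[]; lia.
have -> : k%:Z - p%:Z = (k - p)%N by lia.
rewrite /=; case: (asboolP (S (k - p))) => [Skp | nSkp].
  have Sk : S k by rewrite -(subnK p_le); apply: S_addp.
  by rewrite (asboolT Sk) (asboolF (P := is_gen _ _ _)) // => -[_ []].
by rewrite add0n; congr nat_of_bool; apply/asboolP/asboolP => [Sk | []//]; split=> // -[].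
Qed.

Lemma gens_le_step (k : nat) : gens_le k = (gens_le (k%:Z - 1) + `[< is_gen p S k >])%N.
Proof.
rewrite /gens_le.
rewrite (@eq_count _ (fun g : nat => g%:Z <= k%:Z) (fun g => g < k.+1)%N); last first.
  by move=> g /=; apply/idP/idP; lia.
rewrite (@eq_count _ (fun g : nat => g%:Z <= k%:Z - 1) (fun g => g < k)%N); last first.
  by move=> g /=; apply/idP/idP; lia.
have split_lt (s : seq nat) :
    count (fun g => g < k.+1)%N s = (count (fun g => g < k)%N s + count_mem k s)%N.
  by elim: s => //= x s ->; rewrite ltnS leq_eqVlt; case: eqVneq => [->|_] /=; rewrite ?ltnn; lia.
rewrite split_lt count_uniq_mem ?filter_uniq ?iota_uniq //.
rewrite mem_filter mem_iota add0n leq0n /=; congr addn.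
by case: (asboolP (is_gen p S k)) => //= /gen_lt ->.
Qed.

Lemma window_eq_gens_le c : window c = gens_le c.
Proof.
have below c' : c' < 0 -> window c' = gens_le c'.
  move=> c'_lt0; rewrite /window /gens_le !(eq_count (a2 := pred0)) ?count_pred0 //.
    by move=> g /=; apply/negbTE; lia.
  by move=> x /=; apply: asboolF; apply: int_mem_neg; lia.
suff shifted k : window (k%:Z - 1) = gens_le (k%:Z - 1).
  case: c => [k|k]; last by rewrite below.
  by have := shifted k.+1; have -> : k.+1%:Z - 1 = k by lia.
elim: k => [|k IH]; first by rewrite below.
have -> : k.+1%:Z - 1 = k by lia.
have step := window_step (k%:Z - 1).
have e1 : k%:Z - 1 - (p.-1)%:Z = k%:Z - p%:Z by lia.
have e2 : k%:Z - 1 + 1 = k by lia.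
rewrite e1 e2 {e1 e2} in step.
have := int_mem_gen_split k; rewrite gens_le_step -IH; lia.
Qed.

Lemma count_window_gens (t : int) (a : nat) :
  count (fun x : nat => `[< int_mem S (t - x%:Z) >]) (iota a p)
  = count (fun g : nat => g%:Z + a%:Z <= t) gensS.
Proof.
rewrite -[a]addn0 iotaDl count_map addn0.
transitivity (window (t - a%:Z)).
  by apply: eq_count => x /=; congr `[< int_mem S _ >]; lia.
by rewrite window_eq_gens_le; apply: eq_count => g /=; apply/idP/idP; lia.
Qed.

Lemma gaps_in_reflect (T : nat -> Prop) (t : int) (a : nat) :
  (forall y : nat, ~ T y <-> int_mem S (t - y%:Z)) ->
  gaps_in T a p = count (fun g : nat => g%:Z + a%:Z <= t) gensS.
Proof.
move=> reflectT; rewrite /gaps_in -count_window_gens.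
by apply: eq_count => y /=; rewrite -asbool_neg; apply/asboolP/asboolP => /reflectT.
Qed.

End GeneratorCount.

Lemma is_gen_lt (p N : nat) (S : nat -> Prop) a :
  (forall k, (N <= k)%N -> S k) -> is_gen p S a -> (a < p + N)%N.
Proof.
move=> S_ge [_ not_prev]; rewrite ltnNge; apply/negP => le_a; apply: not_prev.
by split; [lia | apply: S_ge; lia].
Qed.

Lemma sorted_gens m n p S : sorted ltn (gens m n p S).
Proof. by apply: sorted_filter; [exact: ltn_trans | exact: iota_ltn_sorted]. Qed.

Lemma exists_last_gap {S : nat -> Prop} {N : nat} :
  (forall k, (N <= k)%N -> S k) ->
  exists F : int, [/\ ~ int_mem S F, forall k, F < k -> int_mem S k & F < N%:Z].
Proof.
move=> S_ge.
pose P j := (j == 0)%N || ~~ `[< S j.-1 >].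
have P_le j : P j -> (j <= N)%N.
  case/orP => [/eqP -> // |]; rewrite leqNgt; apply: contra => N_lt.
  by apply/asboolP; apply: S_ge; lia.
have [j Pj j_max] := ex_maxnP (ex_intro P 0%N isT) P_le.
exists (j%:Z - 1); split.
- case: j Pj {j_max} => [|j] Pj; first by [].
  have -> : j.+1%:Z - 1 = j by lia.
  by case/orP: Pj => // /asboolPn.
- case=> [k|k] lt_k /=; last by lia.
  apply: contrapT => nSk; have /j_max : P k.+1 by apply/orP; right; apply/asboolPn.
  lia.
- by have := P_le _ Pj; lia.
Qed.

Definition frobenius (m n : nat) : int := (m * n)%N%:Z - m%:Z - n%:Z.

Section NumericalSemigroup.
Variables (m n : nat).
Hypotheses (m_gt0 : (0 < m)%N) (n_gt0 : (0 < n)%N) (mn_coprime : coprime m n).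

Lemma inGamma_frobenius_excl (z : int) :
  inGamma m n z -> ~ inGamma m n (frobenius m n - z).
Proof.
rewrite /frobenius => -[a [b ->]] [c [d cd_eq]].
have mn_eq : (m * n = (a + c + 1) * m + (b + d + 1) * n)%N by lia.
have m_dvd : (m %| b + d + 1)%N.
  have : (m %| (a + c + 1) * m + (b + d + 1) * n)%N by rewrite -mn_eq dvdn_mulr.
  rewrite dvdn_addr; last exact: dvdn_mull.
  by rewrite mulnC Gauss_dvdr.
have n_dvd : (n %| a + c + 1)%N.
  have : (n %| (b + d + 1) * n + (a + c + 1) * m)%N by rewrite addnC -mn_eq dvdn_mull.
  rewrite dvdn_addr; last exact: dvdn_mull.
  by rewrite mulnC Gauss_dvdr // coprime_sym.
have m_le : (m <= b + d + 1)%N by apply: dvdn_leq; rewrite // addn1.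
have n_le : (n <= a + c + 1)%N by apply: dvdn_leq; rewrite // addn1.
have : (n * m <= (a + c + 1) * m)%N by rewrite leq_mul2r n_le orbT.
have : (m * n <= (b + d + 1) * n)%N by rewrite leq_mul2r m_le orbT.
have : (0 < m * n)%N by rewrite muln_gt0 m_gt0.
lia.
Qed.

Lemma inGamma_frobenius_cover (z : int) :
  inGamma m n z \/ inGamma m n (frobenius m n - z).
Proof.
have [u [v uv_eq]] := Bezoutz m n.
have gcd1 : gcdz m n = 1 by rewrite /gcdz /= (eqP mn_coprime).
rewrite gcd1 in uv_eq.
set q := ((z * v) %/ m%:Z)%Z; set b := ((z * v) %% m%:Z)%Z.
have b_ge0 : 0 <= b by apply: modz_ge0; rewrite eqz_nat; lia.
have b_lt : b < m%:Z by apply: ltz_pmod; rewrite ltz_nat.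
have b_eq : b = z * v - q * m%:Z by rewrite /b {2}(divz_eq (z * v) m); ring.
set a := z * u + q * n%:Z.
have z_eq : z = a * m%:Z + b * n%:Z by rewrite /a b_eq -[z in LHS]mulr1 -uv_eq; ring.
have nat_of_ge0 (x : int) : 0 <= x -> exists k : nat, x = k.
  by case: x => // k _; exists k.
have [kb kb_eq] := nat_of_ge0 _ b_ge0.
have [a_ge0 | a_lt0] := lerP 0 a.
  have [ka ka_eq] := nat_of_ge0 _ a_ge0.
  by left; exists ka, kb; rewrite z_eq ka_eq kb_eq; lia.
have [ka ka_eq] : exists ka : nat, - a - 1 = ka by apply: nat_of_ge0; lia.
have [kb' kb'_eq] : exists kb' : nat, m%:Z - 1 - b = kb' by apply: nat_of_ge0; lia.
right; exists ka, kb'.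
by rewrite PoszD !PoszM -ka_eq -kb'_eq /frobenius z_eq; ring.
Qed.

Lemma inGamma_ge (k : nat) : (m * n <= k)%N -> inGamma m n k.
Proof.
by move=> le_k; case: (inGamma_frobenius_cover k) => // -[a [b]]; rewrite /frobenius; lia.
Qed.

End NumericalSemigroup.

Lemma semimodule_addm m n (S : nat -> Prop) x : semimodule m n S -> S x -> S (x + m)%N.
Proof. by move=> S_mod /(S_mod _ 1%N 0%N); rewrite mul1n mul0n addn0. Qed.

Lemma semimodule_addn m n (S : nat -> Prop) x : semimodule m n S -> S x -> S (x + n)%N.
Proof. by move=> S_mod /(S_mod _ 0%N 1%N); rewrite mul1n mul0n addn0. Qed.

(* [D] reflected at [F]: in the paper's notation, [F - (Z \ D)]. *)
Definition reflected (D : nat -> Prop) (F : int) (x : nat) : Prop :=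
  ~ int_mem D (F - x%:Z).

Section Semimodule.
Variables (m n : nat) (D : nat -> Prop).
Hypotheses (m_gt0 : (0 < m)%N) (n_gt0 : (0 < n)%N) (mn_coprime : coprime m n)
  (D_mod : semimodule m n D) (D0 : D 0%N).

Lemma int_mem_addGamma (z g : int) : int_mem D z -> inGamma m n g -> int_mem D (z + g).
Proof.
case: z => [k|k] //= Dk [a [b ->]].
by rewrite -PoszD addnA; apply: D_mod.
Qed.

Lemma semimodule_ge (k : nat) : (m * n <= k)%N -> D k.
Proof.
move=> /(inGamma_ge _ _ m_gt0 n_gt0 mn_coprime) [a [b [->]]].
by move: (D_mod 0%N a b D0); rewrite add0n.
Qed.

Lemma dualE (phi : int) : dual m n D phi <-> ~ int_mem D (frobenius m n - phi).
Proof.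
have frob_excl := inGamma_frobenius_excl _ _ m_gt0 n_gt0 mn_coprime.
split=> [dual_phi | not_mem x Dx].
- case E: (frobenius m n - phi) => [k|k] //= Dk.
  have := dual_phi k Dk; rewrite (_ : phi + k%:Z = frobenius m n); last by lia.
  by move/frob_excl; rewrite subrr; apply; exists 0%N, 0%N.
- have [//|frob_sub] := inGamma_frobenius_cover _ _ m_gt0 n_gt0 mn_coprime (phi + x%:Z).
  case: not_mem; have := int_mem_addGamma x _ Dx frob_sub.
  by rewrite (_ : x%:Z + _ = frobenius m n - phi) //; lia.
Qed.

Section LastGap.
Variable F : int.
Hypotheses (F_gap : ~ int_mem D F) (F_last : forall k, F < k -> int_mem D k).

Lemma hat_reflected : hat m n D = reflected D F.
Proof.
have dual_shift (x : nat) : dual m n D (frobenius m n - F + x%:Z) <-> reflected D F x.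
  by rewrite dualE /reflected (_ : _ - _ = F - x%:Z) //; lia.
have dual_min phi : dual m n D phi -> frobenius m n - F <= phi.
  move/dualE => not_mem; rewrite leNgt; apply/negP => lt_phi.
  by apply: not_mem; apply: F_last; lia.
have dual_base : dual m n D (frobenius m n - F).
  by rewrite -[_ - F]addr0; apply/(dual_shift 0%N); rewrite /reflected subr0.
apply: funext => x; apply: propext; split.
- move=> [phi0 [dual0 min0]].
  have -> : phi0 = frobenius m n - F by apply/eqP; rewrite eq_le dual_min // min0.
  by move/dual_shift.
- by move=> /dual_shift dualx; exists (frobenius m n - F).
Qed.

Lemma reflected_semimodule : semimodule m n (reflected D F).
Proof.
move=> x a b not_mem Dx; apply: not_mem.
have Gamma_ab : inGamma m n (a * m + b * n)%N by exists a, b.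
have := int_mem_addGamma _ _ Dx Gamma_ab.
by rewrite (_ : _ + _ = F - x%:Z) //; lia.
Qed.

Lemma not_reflectedE (y : nat) : ~ reflected D F y <-> int_mem D (F - y%:Z).
Proof. by split=> [/contrapT | mem]. Qed.

Lemma not_memE (y : nat) : ~ D y <-> int_mem (reflected D F) (F - y%:Z).
Proof.
case E: (F - y%:Z) => [k|k] /=.
  by rewrite /reflected (_ : F - k%:Z = y) //; lia.
by split=> // not_Dy; apply: not_Dy; apply: (F_last y); lia.
Qed.

Hypothesis F_lt : F < (m * n)%N%:Z.

Lemma reflected_ge (k : nat) : (m * n <= k)%N -> reflected D F k.
Proof. by move=> le_k; apply: int_mem_neg; lia. Qed.

Lemma Gn_heights_threshold :
  Gn_heights m n D =
  [seq count (fun a : nat => a%:Z + b%:Z <= F) (gens m n m (reflected D F)) | b <- gens m n n D].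
Proof.
apply: eq_map => b; rewrite /gens; apply: gaps_in_reflect => //.
- by move=> x; apply: semimodule_addm reflected_semimodule.
- by move=> a; apply: is_gen_lt; apply: reflected_ge.
- by move=> y; apply: not_memE.
Qed.

Lemma Gm_heights_reflected_threshold :
  Gm_heights m n (reflected D F) =
  [seq count (fun b : nat => b%:Z + a%:Z <= F) (gens m n n D) | a <- gens m n m (reflected D F)].
Proof.
apply: eq_map => a; rewrite /gens; apply: gaps_in_reflect => //.
- by move=> x; apply: semimodule_addn D_mod.
- by move=> b; apply: is_gen_lt; apply: semimodule_ge.
- by move=> y; apply: not_reflectedE.
Qed.

End LastGap.
End Semimodule.

Theorem mainTheorem5 (m n : nat) (D : nat -> Prop) :
  (0 < m)%N -> (0 < n)%N -> coprime m n ->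
  semimodule m n D -> zero_normalized D ->
  young_diagram (Gn_heights m n D)
  = transpose_diagram (young_diagram (Gm_heights m n (hat m n D))).
Proof.
move=> m_gt0 n_gt0 mn_coprime D_mod [D0 _].
have D_ge := semimodule_ge m n D m_gt0 n_gt0 mn_coprime D_mod D0.
have [F [F_gap F_last F_lt]] := exists_last_gap D_ge.
rewrite (hat_reflected m n D m_gt0 n_gt0 mn_coprime D_mod F F_gap F_last).
rewrite (Gn_heights_threshold m n D m_gt0 n_gt0 mn_coprime D_mod F F_last F_lt).
rewrite (Gm_heights_reflected_threshold m n D m_gt0 n_gt0 mn_coprime D_mod D0 F).
exact: young_diagram_threshold_transpose (sorted_gens _ _ _ _) (sorted_gens _ _ _ _).
Qed.
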